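(* $\Sigma^*\setminus L_{\mathrm{UNIQ}}\subseteq\bigcup_{x\in\Sigma}\bigcup_{a,b\in\Sigma\setminus\{x\}}K_{x,a,b}$; that is, every string $w\in\Sigma^*$ that is not uniquely decodable from its bigram counts belongs to $L_{\mathrm{OBST}}$.
   Context: Let $\Sigma$ be a finite alphabet and $\$\notin\Sigma$ a delimiter symbol; $\Sigma_\$=\Sigma\cup\{\$\}$. The bigram map $\Phi$ sends a string $z\in\$\Sigma^*\$$ to the vector $\Phi(z)\in\mathbb{N}^{\Sigma_\$^2}$ whose $(i,j)$ entry is the number of positions at which the two-letter string $ij$ occurs as a contiguous factor of $z$ (counting overlaps). $L_{\mathrm{UNIQ}}$ is the set of $w\in\Sigma^*$ such that the only $z\in\$\Sigma^*\$$ with $\Phi(z)=\Phi(\$w\$)$ is $z=\$w\$$. For $x\in\Sigma$ write $\Sigma_{\neg x}=\Sigma\setminus\{x\}$. For $x\in\Sigma$ and $a,b\in\Sigma_{\neg x}$ (with $a=b$ allowed) define $I_{x,a,b}=\Sigma^*\,a\,x\,\Sigma_{\neg a}^*\,b\,\Sigma^*$, $J_{x,a,b}=\Sigma^*\,a\,\Sigma_{\neg x}^*\,b\,\Sigma^*$ (regular-expression notation), $K_{x,a,b}=I_{x,a,b}\cap J_{x,a,b}$, and $L_{\mathrm{OBST}}=\bigcup_{x\in\Sigma}\bigcup_{a,b\in\Sigma_{\neg x}}K_{x,a,b}$. *)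

From mathcomp Require Import all_boot.
Set Implicit Arguments. Unset Strict Implicit. Unset Printing Implicit Defensive.

Section Bigrams.
Variable T : finType.

(* Strings over Sigma_$ : [None] is the delimiter $, [Some c] is the letter c *)
Definition delim (w : seq T) : seq (option T) := None :: rcons (map Some w) None.

Definition bigram (z : seq (option T)) (i j : option T) : nat :=
  count (pred1 (i, j)) (zip z (behead z)).

Definition uniq_decodable (w : seq T) : Prop :=
  forall u : seq T,
    (forall i j, bigram (delim u) i j = bigram (delim w) i j) -> delim u = delim w.

Definition in_I (x a b : T) (w : seq T) : Prop :=
  exists p m s : seq T, a \notin m /\ w = p ++ [:: a; x] ++ m ++ b :: s.

Definition in_J (x a b : T) (w : seq T) : Prop :=
  exists p m s : seq T, x \notin m /\ w = p ++ a :: m ++ b :: s.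

Definition in_K (x a b : T) (w : seq T) : Prop := in_I x a b w /\ in_J x a b w.

Definition in_OBST (w : seq T) : Prop :=
  exists x a b : T, a != x /\ b != x /\ in_K x a b w.

End Bigrams.

From mathcomp Require Import all_boot.
From Stdlib Require Import Classical.
Set Implicit Arguments. Unset Strict Implicit. Unset Printing Implicit Defensive.

(* A string z is read as a walk in the complete directed graph on its letters;
   its bigram vector Phi(z) is the multiset of steps (pairs z).  If w is not
   uniquely decodable, some u has the same step multiset, and since both walks
   start at $ they agree up to a first divergence: a suffix t c R of $w$ and a
   suffix t d R' of $u$ with c <> d and equal step multisets.
   Core argument (divergence_obstruction): cut t c R at the first step t -> d.
   Before it lies a closed walk P from t to t; the remainder d B must re-enter P
   (closed_walk_returns), say first at v.  This yields two t-to-v segments of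
   the word, t A v inside P and t B1 v through the excursion B1 (disjoint from
   P), not both a single step; a letter x starting either segment then
   witnesses K_{x,t,v} (two_paths).  The end delimiter lies beyond v, so the
   obstruction lives in Sigma^*, and it is transported back to w through the
   injection Some (in_OBST_map) and the common prefix (in_OBST_catl). *)

Section Sequences.
Variable U : eqType.

Lemma first_in (P : pred U) s : has P s ->
  exists s1 v s2, [/\ s = s1 ++ v :: s2, P v & ~~ has P s1].
Proof.
elim: s => //= z s IH; case Pz: (P z) => /=; first by exists [::], z, s.
move=> /IH [s1 [v [s2 [-> Pv Hn]]]]; exists (z :: s1), v, s2.
by rewrite /= Pz.
Qed.

Lemma last_occ (v : U) s : v \in s ->
  exists s1 s2, s = s1 ++ v :: s2 /\ v \notin s2.
Proof.
elim: s => // z s IH; rewrite in_cons; case vs: (v \in s).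
  by move=> _; have [s1 [s2 [-> N]]] := IH vs; exists (z :: s1), s2.
by rewrite orbF => /eqP <-; exists [::], s; rewrite vs.
Qed.

(* From t to any later occurrence of v there is a segment t A v with neither
   t nor v inside A: take the last t before the first v. *)
Lemma segment (t v : U) X : v \in X ->
  exists Y A Z, [/\ t :: X = Y ++ t :: A ++ v :: Z, t \notin A & v \notin A].
Proof.
move=> vX; have hvX : has (pred1 v) X by rewrite has_pred1.
have [X1 [v' [X2 [-> /eqP <- nX1]]]] := first_in hvX.
have [Y [A [EY tA]]] := last_occ (mem_head t X1).
exists Y, A, X2; split => //; first by rewrite -cat_cons EY -catA.
apply: contra nX1 => vA; rewrite has_pred1.
have : v' \in t :: X1 by rewrite EY mem_cat in_cons vA !orbT.
by rewrite in_cons => /orP [/eqP vt|//]; move: tA; rewrite -vt vA.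
Qed.

Lemma factor_rcons (S : seq U) e l y s :
  rcons S e = l ++ y :: s -> y != e -> exists s', S = l ++ y :: s'.
Proof.
case/lastP: s => [|s z].
  by rewrite cats1 => /rcons_inj [_ ->]; rewrite eqxx.
by rewrite -rcons_cons -rcons_cat => /rcons_inj [-> _] _; exists s.
Qed.

Lemma prefix_rcons (S : seq U) e l y s :
  rcons S e = l ++ y :: s -> {subset l <= S}.
Proof.
rewrite (lastI y s) -rcons_cat => /rcons_inj [-> _] z zl.
by rewrite mem_cat zl.
Qed.

(* The list of steps (consecutive pairs) of a sequence; Phi counts its items. *)
Definition pairs (s : seq U) : seq (U * U) := zip s (behead s).

Lemma pairs_cons x s :
  pairs (x :: s) = if s is y :: _ then (x, y) :: pairs s else [::].
Proof. by case: s. Qed.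

Lemma pairs_cat l x y l' :
  pairs (l ++ x :: y :: l') = pairs (rcons l x) ++ (x, y) :: pairs (y :: l').
Proof.
elim: l => [|z l IH] //=.
rewrite [pairs (z :: _)]pairs_cons [pairs (z :: rcons _ _)]pairs_cons IH.
by case: l {IH}.
Qed.

Lemma pair_in l x y l' : (x, y) \in pairs (l ++ x :: y :: l').
Proof. by rewrite pairs_cat mem_cat in_cons eqxx orbT. Qed.

Lemma mem_pairs p q s : (p, q) \in pairs s -> p \in s /\ q \in s.
Proof.
elim: s => // z s IH; rewrite pairs_cons; case: s IH => // y s IH.
rewrite in_cons => /orP [/eqP [-> ->]|/IH [ps qs]].
  by rewrite !inE !eqxx ?orbT.
by split; rewrite in_cons; apply/orP; right.
Qed.

Lemma pairs_rcons_fst p q l x : (p, q) \in pairs (rcons l x) -> p \in l.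
Proof.
elim: l => [|z l IH] //=; rewrite pairs_cons; case: l IH => [|y l] IH /=.
  by rewrite in_cons => /orP [/eqP [-> _]|//]; rewrite eqxx.
rewrite in_cons => /orP [/eqP [-> _]|/IH pl]; first by rewrite eqxx.
by apply/orP; right.
Qed.

Lemma first_pair x y s : (x, y) \in pairs s ->
  exists A B, s = A ++ x :: y :: B /\ (x, y) \notin pairs (rcons A x).
Proof.
elim: s => // z s IH; rewrite pairs_cons; case: s IH => // w s IH.
case: (eqVneq (x, y) (z, w)) => [[-> ->] _|ne]; first by exists [::], s.
rewrite in_cons (negbTE ne) /= => /IH [A [B [E nin]]].
exists (z :: A), B; split; first by rewrite E.
rewrite rcons_cons pairs_cons.
by case: A E nin => [|a A] /= [Ew _] nin; move: ne; rewrite Ew => ne;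
   rewrite in_cons negb_or ne.
Qed.

Lemma first_divergence h s s' :
  perm_eq (pairs (h :: s)) (pairs (h :: s')) -> h :: s != h :: s' ->
  exists p t c d R R', [/\ h :: s = p ++ t :: c :: R, h :: s' = p ++ t :: d :: R',
    c != d & perm_eq (pairs (t :: c :: R)) (pairs (t :: d :: R'))].
Proof.
elim: s h s' => [|c R IH] h [|d R'] pe ne;
  try by [rewrite eqxx in ne | move/perm_size: pe; rewrite !pairs_cons].
have [ecd|cd] := eqVneq c d; last by exists [::], h, c, d, R, R'.
move: pe ne; rewrite -{}ecd [pairs (h :: _ :: R)]pairs_cons [pairs (h :: _ :: R')]pairs_cons.
rewrite perm_cons eqseq_cons eqxx /= => pe ne.
have [p [t [c' [d' [R1 [R1' [-> -> cd' pe']]]]]]] := IH c R' pe ne.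
by exists (h :: p), t, c', d', R1, R1'.
Qed.

Lemma walk_enters (A : pred U) d W Z :
  (forall p q, (p, q) \in pairs (d :: W) -> A p \/ (p, q) \in pairs (d :: Z)) ->
  has A (d :: W) -> has A (d :: Z).
Proof.
move=> steps /first_in [W1 [q [W2 [EW Aq nW1]]]].
case/lastP: W1 EW nW1 => [|W1 p] EW nW1.
  by case: EW => -> _; rewrite /= Aq.
have /steps [Ap|/mem_pairs [_ qZ]] : (p, q) \in pairs (d :: W).
- by rewrite EW cat_rcons pair_in.
- by move: nW1; rewrite has_rcons Ap.
- by apply/hasP; exists q.
Qed.

Lemma closed_walk_returns t c d R R' :
  c != d -> perm_eq (pairs (t :: c :: R)) (pairs (t :: d :: R')) ->
  exists L B, [/\ t :: c :: R = t :: L ++ t :: d :: B,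
    (t, d) \notin pairs (t :: rcons L t) & has (mem (t :: rcons L t)) (d :: B)].
Proof.
move=> cd pe.
have [L0 [B [EL nL]]] : exists L B,
    t :: c :: R = L ++ t :: d :: B /\ (t, d) \notin pairs (rcons L t).
  by apply: first_pair; rewrite (perm_mem pe) pairs_cons mem_head.
have [L EL0] : exists L, L0 = t :: L.
  case: L0 EL {nL} => [/= [ecd _]|l L /= [<- _]]; last by exists L.
  by rewrite ecd eqxx in cd.
subst L0; exists L, B; split => //.
have pe' : perm_eq (pairs (d :: R')) (pairs (t :: rcons L t) ++ pairs (d :: B)).
  move: pe; rewrite EL pairs_cat -[(t, d) :: _]cat1s perm_catCA /=.
  by rewrite [pairs (t :: d :: R')]pairs_cons perm_cons perm_sym.
have hasR' : has (mem (t :: rcons L t)) (d :: R').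
  have : (t, c) \in pairs (t :: d :: R').
    by rewrite -(perm_mem pe) pairs_cons mem_head.
  rewrite pairs_cons in_cons => /orP [/eqP [ecd]|/mem_pairs [tR' _]].
    by rewrite ecd eqxx in cd.
  by apply/hasP; exists t => //; exact: mem_head.
apply: walk_enters hasR' => p q; rewrite (perm_mem pe') mem_cat.
by case/orP => [/mem_pairs [pX _]|]; [left|right].
Qed.

End Sequences.

Section Obstruction.
Variable U : finType.

Lemma in_I_mem x a b (s : seq U) : in_I x a b s -> [/\ x \in s, a \in s & b \in s].
Proof.
by move=> [p [m [s' [_ ->]]]]; rewrite !(mem_cat, in_cons, eqxx, orbT).
Qed.

Lemma in_OBST_catl (w1 w2 : seq U) : in_OBST w2 -> in_OBST (w1 ++ w2).
Proof.
move=> [x [a [b [ax [bx [[p [m [s [am E]]]] [p' [m' [s' [xm E']]]]]]]]]].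
exists x, a, b; do 2!split=> //; split.
- by exists (w1 ++ p), m, s; rewrite E catA.
- by exists (w1 ++ p'), m', s'; rewrite E' catA.
Qed.

(* Two segments t A v and t B v, with t, v outside A and B, A disjoint from B
   and not both empty: the first letter x of a nonempty one gives the pattern
   t x (no t) v of I, while the other segment avoids x, giving J. *)
Lemma two_paths (s : seq U) t v A B p1 s1 p2 s2 :
  s = p1 ++ t :: A ++ v :: s1 -> s = p2 ++ t :: B ++ v :: s2 ->
  t \notin A -> v \notin A -> t \notin B -> v \notin B ->
  ~~ has (mem B) A -> A ++ B != [::] -> in_OBST s.
Proof.
move=> EA EB tA vA tB vB AB.
case: A EA tA vA AB => [|x A'] EA tA vA AB.
  case: B EB tB vB AB => [|x B'] // EB tB vB _ _.
  move: tB vB; rewrite !in_cons !negb_or => /andP [tx tB'] /andP [vx _].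
  exists x, t, v; do ![split=> //].
  - by exists p2, B', s2.
  - by exists p1, [::], s1.
move: tA vA; rewrite !in_cons !negb_or => /andP [tx tA'] /andP [vx _] _.
exists x, t, v; do ![split=> //].
- by exists p1, A', s1.
- exists p2, B, s2; split => //.
  by move: AB; rewrite /= negb_or => /andP [].
Qed.

Lemma divergence_obstruction (t c d e : U) R R' S :
  c != d -> rcons S e = t :: c :: R -> e \notin S ->
  perm_eq (pairs (t :: c :: R)) (pairs (t :: d :: R')) -> in_OBST S.
Proof.
move=> cd ES eS pe.
have [L [B [EL nL hasB]]] := closed_walk_returns cd pe.
(* P := t :: X is the closed walk before the first step t -> d. *)
set X := rcons L t in nL hasB.
have ES2 : t :: c :: R = (t :: X) ++ d :: B by rewrite EL /X -cat_rcons.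
(* v is the first point of the excursion d B back in P; B1 stays outside P. *)
have [B1 [v [B2 [EB vP nB1]]]] := first_in hasB.
have {}vP : v \in t :: X by [].
have vX : v \in X.
  by move: vP; rewrite in_cons => /orP [/eqP ->|//]; rewrite mem_rcons mem_head.
have B1P z : z \in t :: X -> z \notin B1.
  by move=> zP; apply: contraNN nB1 => zB1; apply/hasP; exists z.
have [Y [A [Z [EP tA vA]]]] := segment t vX.
(* Both segments end at v, which lies in P and hence before the final e. *)
have PS : {subset t :: X <= S}.
  by apply: (prefix_rcons (e := e) (y := d) (s := B)); rewrite ES ES2.
have ve : v != e by apply: contraNneq eS => <-; exact: PS.
have [sA ESA] : exists sA, S = (Y ++ t :: A) ++ v :: sA.
  apply: (factor_rcons (s := Z ++ d :: B) _ ve).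
  by rewrite ES ES2 EP -!catA /= -!catA.
have [sB ESB] : exists sB, S = (t :: L ++ t :: B1) ++ v :: sB.
  by apply: (factor_rcons (s := B2) _ ve); rewrite ES EL EB /= -catA.
apply: (two_paths (p1 := Y) (s1 := sA) (p2 := t :: L) (s2 := sB) _ _ tA vA
          (B1P _ (mem_head _ _)) (B1P _ vP)).
- by rewrite ESA -catA.
- by rewrite ESB /= -catA.
- apply/hasPn => z zA; apply: B1P.
  by rewrite EP mem_cat in_cons mem_cat zA !orbT.
- (* both segments trivial would make t -> d a step of P *)
  case: A EP {tA vA ESA} => [|a A] //; case: B1 EB {nB1 B1P ESB} => [|b B1] //=.
  by move=> [ed _] EP; move: nL; rewrite EP ed pair_in.
Qed.

End Obstruction.

Section MapSplit.
Variables (T U : Type) (f : T -> U).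

Lemma map_cat_inv (w : seq T) l1 l2 : map f w = l1 ++ l2 ->
  exists w1 w2, [/\ w = w1 ++ w2, l1 = map f w1 & l2 = map f w2].
Proof.
move=> E; exists (take (size l1) w), (drop (size l1) w).
by rewrite cat_take_drop map_take map_drop E take_size_cat // drop_size_cat.
Qed.

Lemma suffix_rcons_map (w : seq T) (e : U) p y s :
  rcons (map f w) e = p ++ y :: s ->
  exists w1 w2, w = w1 ++ w2 /\ y :: s = rcons (map f w2) e.
Proof.
move=> E; have le : size p <= size w.
  move/(congr1 size): E; rewrite size_rcons size_cat size_map /= addnS.
  by case=> ->; rewrite leq_addr.
exists (take (size p) w), (drop (size p) w); split; first by rewrite cat_take_drop.
by rewrite -(drop_size_cat (y :: s) (erefl (size p))) -E drop_rcons ?size_map // map_drop.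
Qed.

End MapSplit.

Section Transfer.
Variables (T U : finType) (f : T -> U).
Hypothesis f_inj : injective f.

Lemma in_I_map x a b (w : seq T) : in_I (f x) (f a) (f b) (map f w) -> in_I x a b w.
Proof.
move=> [p [m [s [am /map_cat_inv [w1 [w2 [-> _ E2]]]]]]].
case: w2 E2 => [|a' [|x' w2]] //= [/f_inj <- /f_inj <- E3].
have [m' [w3 [-> Em E4]]] := map_cat_inv (esym E3).
case: w3 E4 => [|b' s'] //= [/f_inj <- _].
exists w1, m', s'; split => //.
by move: am; rewrite Em mem_map.
Qed.

Lemma in_J_map x a b (w : seq T) : in_J (f x) (f a) (f b) (map f w) -> in_J x a b w.
Proof.
move=> [p [m [s [xm /map_cat_inv [w1 [w2 [-> _ E2]]]]]]].
case: w2 E2 => [|a' w2] //= [/f_inj <- E3].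
have [m' [w3 [-> Em E4]]] := map_cat_inv (esym E3).
case: w3 E4 => [|b' s'] //= [/f_inj <- _].
exists w1, m', s'; split => //.
by move: xm; rewrite Em mem_map.
Qed.

Lemma in_OBST_map (w : seq T) : in_OBST (map f w) -> in_OBST w.
Proof.
move=> [x [a [b [ax [bx [HI HJ]]]]]].
have [/mapP [x' _ Ex] /mapP [a' _ Ea] /mapP [b' _ Eb]] := in_I_mem HI.
subst x a b; move: ax bx; rewrite !(inj_eq f_inj) => ax bx.
by exists x', a', b'; do 2!split=> //; split; [exact: in_I_map | exact: in_J_map].
Qed.

End Transfer.

Section Delimiters.
Variable T : finType.

Lemma not_uniq_witness (w : seq T) : ~ uniq_decodable w ->
  exists u, (forall i j, bigram (delim u) i j = bigram (delim w) i j) /\ delim w != delim u.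
Proof.
move=> nu; apply: NNPP => nex; apply: nu => u same; apply: NNPP => ne.
by apply: nex; exists u; split=> //; apply/eqP => E; apply: ne.
Qed.

Lemma bigram_perm (z z' : seq (option T)) :
  (forall i j, bigram z i j = bigram z' i j) -> perm_eq (pairs z) (pairs z').
Proof. by move=> same; apply/allP => -[i j] _; apply/eqP; exact: same. Qed.

(* The opening delimiter of $w$ is followed only by the first letter, so two
   strings of the form $...$ cannot diverge right after it. *)
Lemma start_delim_step (w : seq T) c R y :
  rcons (map Some w) None = c :: R -> (None, y) \in pairs (None :: c :: R) -> y = c.
Proof.
move=> Ew; rewrite pairs_cons in_cons => /orP [/eqP [->] //|].
by rewrite -Ew => /pairs_rcons_fst /mapP [].
Qed.

End Delimiters.

Theorem lemma4 (T : finType) (w : seq T) :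
  ~ uniq_decodable w -> in_OBST w.
Proof.
move=> /not_uniq_witness [u [same neq]].
have [[|h p] [t [c [d [R [R' [Ew _ cd pe]]]]]]] :=
  first_divergence (bigram_perm (fun i j => esym (same i j))) neq.
- (* divergence right after the opening delimiter is impossible *)
  case: Ew => Et Ew; subst t.
  have : (None, d) \in pairs (None :: c :: R).
    by rewrite (perm_mem pe) pairs_cons mem_head.
  by move/(start_delim_step Ew) => dc; rewrite dc eqxx in cd.
- (* otherwise the diverging suffix is w2 followed by the closing delimiter *)
  case: Ew => _ Ew; have [w1 [w2 [-> Es]]] := suffix_rcons_map Ew.
  apply/in_OBST_catl/(in_OBST_map Some_inj).
  apply: (divergence_obstruction cd (esym Es) _ pe).
  by apply/mapP => -[].
Qed.
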